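(* Let $n\in\mathbb N$. Then: (i) $\delta(n)<\frac n4$ if and only if both (a) $n\ne p,2p,3p,4p$ for every prime $p$ (including $p=2$), and (b) $n\notin\{1,16,18,24,25,27,30,32,35,36,40,42,45,48,49,50,54,55,56,60,63,64,65,66,75,85,95\}$; (ii) $\delta(n)=\frac n4$ if and only if $n=64$.
   Context: $\mathbb N$ is the set of positive integers. For $n\in\mathbb N$, $\delta(n)=\min\{\,r+s : r,s\in\mathbb N,\ r\le s,\ rs=n\,\}$, i.e. the minimum of $d+n/d$ over positive divisors $d$ of $n$. *)

From mathcomp Require Import all_boot.
Set Implicit Arguments. Unset Strict Implicit. Unset Printing Implicit Defensive.

(* delta n = min { r + s : r, s positive, r <= s, r * s = n }
   = min over divisors r of n with r * r <= n (i.e. r <= n/r) of r + n/r.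
   The default value n.+1 is never reached for n >= 1 (r = 1 works). *)
Definition delta (n : nat) : nat :=
  \big[minn/n.+1]_(r <- divisors n | r * r <= n) (r + n %/ r).

Definition exceptional : seq nat :=
  [:: 1; 16; 18; 24; 25; 27; 30; 32; 35; 36; 40; 42; 45; 48; 49; 50; 54; 55;
      56; 60; 63; 64; 65; 66; 75; 85; 95].

(* If [n = r s] with [4 < r <= s], then [(r - 4)(s - 4) > 16] once [n > 100], so
   [4 delta(n) <= 4 (r + s) < n]; and such an [n] is not [k p] with [k <= 4] and
   [p] prime, since [p] divides [r] or [s]. Otherwise every divisor [r <= sqrt n]
   is at most 4, so [4 (r + n/r) > n] for all of them, and for [n > 64] the least
   divisor of [n] above 4 is a prime [p] with [n = k p], [k <= 4]. The values
   [n <= 100] are checked by computation. *)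

From mathcomp Require Import all_boot zify.

Definition small_multiple_of_prime (n : nat) : bool :=
  has (fun k => (k %| n) && prime (n %/ k)) (iota 1 4).

Lemma small_multiple_of_primeP n :
  reflect (exists k p, [/\ 0 < k < 5, prime p & n = k * p])
          (small_multiple_of_prime n).
Proof.
apply: (iffP hasP) => [[k] | [k [p [/andP[k0 k5] pp ->]]]].
  rewrite mem_iota => kb /andP[kn pk]; exists k, (n %/ k).
  split=> //; first lia; by rewrite mulnC divnK.
exists k; first by rewrite mem_iota; lia.
by rewrite dvdn_mulr //= mulKn.
Qed.

Lemma small_multiple_of_primePn n :
  (forall p, prime p -> n <> p /\ n <> 2 * p /\ n <> 3 * p /\ n <> 4 * p) <->
  ~~ small_multiple_of_prime n.
Proof.
split=> [np | /small_multiple_of_primeP nsmp p pp].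
  apply/small_multiple_of_primeP => -[k [p [k5 pp nkp]]].
  have := np p pp; rewrite nkp.
  case: k k5 {nkp} => [|[|[|[|[|?]]]]] //= _ [h1 [h2 [h3 h4]]];
    by [apply: h1; rewrite mul1n | apply: h2 | apply: h3 | apply: h4].
split; [|split; [|split]] => nkp; apply: nsmp;
  by [exists 1, p; rewrite mul1n | exists 2, p | exists 3, p | exists 4, p].
Qed.

Lemma bigmin_le_seq (I : eqType) (r : seq I) (P : pred I) (F : I -> nat) x0 i :
  i \in r -> P i -> \big[minn/x0]_(j <- r | P j) F j <= F i.
Proof.
elim: r => // j r IH; rewrite inE big_cons => /predU1P[<- -> | /IH le_Fi Pi].
  exact: geq_minl.
by case: ifP => _; [apply: leq_trans (geq_minr _ _) _ |]; apply: le_Fi.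
Qed.

Lemma delta_le_dvd n d : 0 < n -> d %| n -> delta n <= d + n %/ d.
Proof.
move=> n0; wlog dd : d / d * d <= n => [le_sq dn | dn].
  have [dd | lt_n_dd] := leqP (d * d) n; first exact: le_sq.
  have ne : n = n %/ d * d by rewrite divnK.
  have e0 : 0 < n %/ d by rewrite lt0n; apply: contraTneq n0 => e0; rewrite ne e0.
  rewrite addnC -{2}(mulKn d e0) -ne; apply: le_sq; last exact: dvdn_div.
  rewrite {3}ne leq_mul2l; nia.
by apply: bigmin_le_seq; rewrite -?dvdn_divisors.
Qed.

(* If every divisor [r <= sqrt n] is at most 4, then [4 (r + n/r) > 4 n/r >= n]. *)
Lemma delta_gt_quarter n :
  0 < n -> (forall r, r %| n -> r * r <= n -> r <= 4) -> n < 4 * delta n.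
Proof.
move=> n0 small; rewrite /delta big_seq_cond.
apply: (big_ind (fun x => n < 4 * x)); first lia.
  by move=> x y; rewrite /minn; case: ifP.
move=> r /andP[]; rewrite -dvdn_divisors // => rn rr.
have r4 := small r rn rr; have := divnK rn; nia.
Qed.

Lemma mul_neq_small_mul_prime {d e k p : nat} :
  prime p -> k < 5 -> 4 < d -> 4 < e -> d * e != k * p.
Proof.
move=> pp k5 d4 e4; apply/eqP => de.
wlog pd : d e d4 e4 de / p %| d.
  move=> sym; have : p %| d * e by rewrite de dvdn_mull.
  rewrite Euclid_dvdM // => /orP[pd | pe]; first exact: (sym d e).
  by apply: (sym e d) => //; rewrite mulnC.
case/dvdnP: pd d4 de => [[|j] ->] //= d4 /eqP.
rewrite mulnAC eqn_pmul2r ?prime_gt0 // => /eqP; nia.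
Qed.

(* A prime factor [q <= 4] of [d] would give the divisor [d / q] with [4 < d / q < d]. *)
Lemma prime_no_divisor_above4 d :
  16 < d -> (forall m, m %| d -> 4 < m -> d <= m) -> prime d.
Proof.
move=> d16 above4; have d1 : 1 < d by lia.
have [q4 | q5] := leqP (pdiv d) 4; last first.
  suff -> : d = pdiv d by apply: pdiv_prime.
  by apply/eqP; rewrite eqn_leq above4 ?pdiv_dvd // pdiv_leq; lia.
have q1 := prime_gt1 (pdiv_prime d1); have dq := divnK (pdiv_dvd d).
exfalso; have := above4 _ (dvdn_div (pdiv_dvd d)); nia.
Qed.

(* The least divisor [d > 4] of [n] is prime; the cofactor [n / d] is a divisor
   below [sqrt n], hence at most 4. *)
Lemma small_multiple_of_prime_small_divisors n :
  64 < n -> (forall r, r %| n -> r * r <= n -> r <= 4) ->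
  small_multiple_of_prime n.
Proof.
move=> n64 small; have exP : exists d, (4 < d) && (d %| n) by exists n; rewrite dvdnn; lia.
case: (ex_minnP exP) => d /andP[d4 dn] dmin.
have ne : n = n %/ d * d by rewrite divnK.
have nd : n < d * d by rewrite ltnNge; apply: contraTN d4 => /(small d dn); lia.
have e4 : n %/ d <= 4 by apply: small; [exact: dvdn_div | nia].
have dp : prime d.
  apply: prime_no_divisor_above4 => [|m md m4]; first nia.
  by apply: dmin; rewrite m4 (dvdn_trans md dn).
apply/small_multiple_of_primeP; exists (n %/ d), d; split=> //; nia.
Qed.

Lemma delta_quarter_large n :
  100 < n -> (4 * delta n < n) = ~~ small_multiple_of_prime n /\ 4 * delta n != n.
Proof.
move=> n100; have n0 : 0 < n by lia.
have [/existsP[r /and3P[rn r4 rr]] | /existsP no_mid] :=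
  boolP [exists r : 'I_n.+1, [&& val r %| n, 4 < r & r * r <= n]].
  have ne : n = n %/ r * r by rewrite divnK.
  have lt : 4 * delta n < n.
    apply: leq_ltn_trans (_ : 4 * (r + n %/ r) < n).
      by rewrite leq_mul2l delta_le_dvd.
    nia.
  rewrite lt; split; last lia.
  apply/esym/negP => /small_multiple_of_primeP[k [p [/andP[_ k5] pp nkp]]].
  have e4 : 4 < n %/ r by nia.
  by move: (mul_neq_small_mul_prime pp k5 e4 r4); rewrite -ne nkp eqxx.
have small r : r %| n -> r * r <= n -> r <= 4.
  move=> rn rr; rewrite leqNgt; apply/negP => r4; apply: no_mid.
  have rn1 : r < n.+1 by rewrite ltnS dvdn_leq.
  by exists (Ordinal rn1); rewrite /= rn r4.
have gt := delta_gt_quarter n n0 small.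
have smp : small_multiple_of_prime n.
  by apply: small_multiple_of_prime_small_divisors => //; lia.
by rewrite smp; split; lia.
Qed.

Lemma delta_quarter_small :
  all (fun n => ((4 * delta n < n) == ~~ small_multiple_of_prime n && (n \notin exceptional))
                && ((4 * delta n == n) == (n == 64)))
      (iota 1 100).
Proof. by rewrite /delta unlock; vm_compute. Qed.

Lemma delta_quarter_spec n : 0 < n ->
  (4 * delta n < n) = ~~ small_multiple_of_prime n && (n \notin exceptional) /\
  (4 * delta n == n) = (n == 64).
Proof.
move=> n0; have [n100 | n100] := leqP n 100.
  have := allP delta_quarter_small n; rewrite mem_iota n0 add1n ltnS n100.
  by case/(_ isT)/andP => /eqP-> /eqP->.
have [-> /negbTE->] := delta_quarter_large n n100.
have exc100 : all (leq^~ 100) exceptional by [].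
have -> : n \notin exceptional by apply: contraTN n100 => /(allP exc100); lia.
by rewrite andbT; split=> //; apply/esym/eqP; lia.
Qed.

Theorem proposition3p10 (n : nat) : 0 < n ->
  ((4 * delta n < n) <->
     ((forall p, prime p -> n <> p /\ n <> 2 * p /\ n <> 3 * p /\ n <> 4 * p)
      /\ n \notin exceptional))
  /\ ((4 * delta n = n) <-> n = 64).
Proof.
move=> n0; have [ltE eqE] := delta_quarter_spec n n0; split.
  rewrite ltE small_multiple_of_primePn.
  by split=> [/andP[] | []] ? ?; [split | apply/andP; split].
split=> /eqP; first by rewrite eqE => /eqP.
by rewrite -eqE => /eqP.
Qed.
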